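(* Let $P_1\ge P_2\ge\cdots\ge P_K\ge0$ with $P_1>0$. For any nonempty set $A\subseteq\{1,\dots,K\}$ with $l=\min A$, $$\frac12\log\left(1+\Big(\sum_{j\in A}\sqrt{P_j}\Big)^2\right)-\left[\frac12\log\left(\Big(\frac1{\sum_{j=1}^KP_j}+1\Big)P_l\right)\right]^+\le\log K.$$
   Context: Logarithms are base 2, $[x]^+=\max\{x,0\}$, and $[\log 0]^+=0$. *)

From HB Require Import structures.
From mathcomp Require Import all_boot all_order all_algebra.
From mathcomp Require Import reals exp.
Set Implicit Arguments. Unset Strict Implicit. Unset Printing Implicit Defensive.
Import Order.TTheory GRing.Theory Num.Theory.
Local Open Scope ring_scope.

Definition log2 {R : realType} (x : R) : R := ln x / ln 2.

Definition posp {R : realType} (x : R) : R := Num.max x 0.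

(* [ (1/2) log y ]^+, with the convention [log 0]^+ = 0. *)
Definition poshalflog {R : realType} (y : R) : R :=
  if y == 0 then 0 else posp (2^-1 * log2 y).

From HB Require Import structures.
From mathcomp Require Import all_boot all_order all_algebra.
From mathcomp Require Import reals exp.
From mathcomp Require Import lra.
Import Order.TTheory GRing.Theory Num.Theory.
Local Open Scope ring_scope.

(* Write S for the sum of square roots, T for the total power, p = P_l and
   q = p / T; taking logarithms, it suffices that 1 + S^2 <= K^2 max(1, p + q).  By
   monotonicity S <= (K - l) sqrt p.  If l is the first index, then T <= K p,
   so 1 <= K q and 1 + S^2 <= K^2 (p + q).  Otherwise K - l <= K - 1 and
   1 + (K - 1)^2 p <= K^2 max(1, p) because (K - 1)^2 + 1 <= K^2. *)

Section NonincreasingSums.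
Variables (R : realType) (K : nat) (F : 'I_K -> R).
Hypothesis F_nonincr : forall i j : 'I_K, (i <= j)%N -> F j <= F i.

Lemma sum_nonincr_le_tail (A : {set 'I_K}) (l : 'I_K) :
  0 <= F l -> (forall j, j \in A -> (l <= j)%N) ->
  \sum_(j in A) F j <= (K - l)%:R * F l.
Proof.
move=> Fl_ge0 A_ge_l.
apply: (@le_trans _ _ (\sum_(j < K | (l <= j)%N) F l)).
  rewrite big_mkcond [leRHS]big_mkcond /=; apply: ler_sum => j _.
  case: ifP => [jA|_]; first by rewrite A_ge_l // F_nonincr // A_ge_l.
  by case: ifP.
by rewrite -(big_geq_mkord l K xpredT (fun _ => F l)) sumr_const_nat mulr_natl.
Qed.

Lemma sum_nonincr_le_head (hK : (0 < K)%N) :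
  0 <= F (Ordinal hK) -> \sum_(j < K) F j <= K%:R * F (Ordinal hK).
Proof.
move=> F0_ge0.
have := sum_nonincr_le_tail [set: 'I_K] (Ordinal hK) F0_ge0 (fun j _ => leq0n j).
by rewrite subn0 (eq_bigl xpredT) // => j; rewrite in_setT.
Qed.

End NonincreasingSums.

Lemma ler_sqr_pred_mul_max (R : realFieldType) (k p : R) :
  1 <= k -> 0 <= p -> 1 + (k - 1) ^+ 2 * p <= k ^+ 2 * Num.max 1 p.
Proof.
move=> k_ge1 p_ge0; have gap : (k - 1) ^+ 2 + 1 <= k ^+ 2 by rewrite !expr2; nra.
case: (lerP 1 p) => [p_ge1|p_lt1].
  by rewrite !expr2 in gap *; nra.
have : (k - 1) ^+ 2 * p <= (k - 1) ^+ 2 by rewrite ler_piMr ?sqr_ge0 // ltW.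
lra.
Qed.

Lemma poshalflog_max (R : realType) (y : R) :
  0 <= y -> poshalflog y = 2^-1 * log2 (Num.max 1 y).
Proof.
move=> y_ge0; rewrite /poshalflog /posp /log2.
have ln2_gt0 : 0 < ln (2 : R) by apply: ln_gt0; lra.
case: eqP => [->|/eqP y_neq0].
  by rewrite max_l ?ler01 // ln1 mul0r mulr0.
case: (lerP 1 y) => [y_ge1|y_lt1].
  apply/max_idPl; apply: mulr_ge0; first lra.
  by apply: divr_ge0; [apply: ln_ge0 | apply: ltW].
rewrite ln1 mul0r mulr0; apply/max_idPr.
have lny_lt0 : ln y < 0 by apply: ln_lt0; rewrite lt0r y_neq0 y_ge0.
have : 0 < (ln (2 : R))^-1 by rewrite invr_gt0.
nra.
Qed.

Lemma halflog2_sub_le (R : realType) (x m k : R) :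
  0 < x -> 0 < m -> 0 < k -> x <= k ^+ 2 * m ->
  2^-1 * log2 x - 2^-1 * log2 m <= log2 k.
Proof.
move=> x_gt0 m_gt0 k_gt0 x_le; rewrite /log2.
have ln2_gt0 : 0 < ln (2 : R) by apply: ln_gt0; lra.
have : ln x <= ln k *+ 2 + ln m.
  rewrite -lnXn // -lnM ?posrE ?exprn_gt0 // ler_ln ?posrE //.
  by rewrite mulr_gt0 ?exprn_gt0.
rewrite mulr2n => ln_le.
have : 0 < (ln (2 : R))^-1 by rewrite invr_gt0.
nra.
Qed.

Section NonincreasingPowers.
Variables (R : realType) (K : nat) (hK : (0 < K)%N) (P : 'I_K -> R).
Hypothesis P_nonincr : forall i j : 'I_K, (i <= j)%N -> P j <= P i.
Hypothesis P_ge0 : forall i : 'I_K, 0 <= P i.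
Hypothesis P0_gt0 : 0 < P (Ordinal hK).

Let T := \sum_(j < K) P j.

Lemma sum_powers_gt0 : 0 < T.
Proof.
apply: lt_le_trans P0_gt0 _; rewrite /T (bigD1 (Ordinal hK)) //= lerDl.
by apply: sumr_ge0 => j _.
Qed.

Lemma sqr_sum_sqrt_le (A : {set 'I_K}) (l : 'I_K) :
  (forall j, j \in A -> (l <= j)%N) ->
  (\sum_(j in A) Num.sqrt (P j)) ^+ 2 <= (K - l)%:R ^+ 2 * P l.
Proof.
move=> A_ge_l; set S := \sum_(j in A) _.
have S_ge0 : 0 <= S by apply: sumr_ge0 => j _; apply: sqrtr_ge0.
have S_le : S <= (K - l)%:R * Num.sqrt (P l).
  apply: sum_nonincr_le_tail => // [i j ij|]; last exact: sqrtr_ge0.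
  by rewrite ler_sqrt ?P_nonincr.
rewrite -[P l]sqr_sqrtr // -exprMn lerXn2r ?nnegrE //.
by rewrite mulr_ge0 ?sqrtr_ge0.
Qed.

Lemma one_add_sqr_sum_sqrt_le (A : {set 'I_K}) (l : 'I_K) :
  (forall j, j \in A -> (l <= j)%N) ->
  1 + (\sum_(j in A) Num.sqrt (P j)) ^+ 2 <= K%:R ^+ 2 * Num.max 1 ((T^-1 + 1) * P l).
Proof.
move=> A_ge_l; have S2_le := sqr_sum_sqrt_le _ _ A_ge_l.
set S := \sum_(j in A) _ in S2_le *; set p := P l in S2_le *; set k : R := K%:R.
have p_ge0 : 0 <= p by apply: P_ge0.
have k_ge1 : 1 <= k by rewrite ler1n.
have T_gt0 := sum_powers_gt0.
have [l0|l_gt0] := posnP l.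
- have T_le : T <= k * p.
    by rewrite /p (_ : l = Ordinal hK); [exact: sum_nonincr_le_head | exact: val_inj].
  have one_le : 1 <= k ^+ 2 * (p / T).
    rewrite mulrA ler_pdivlMr // mul1r expr2 -mulrA.
    by apply: le_trans T_le _; rewrite ler_peMl // mulr_ge0 // (le_trans ler01).
  rewrite l0 subn0 -/k in S2_le.
  have y_le_max : (T^-1 + 1) * p <= Num.max 1 ((T^-1 + 1) * p).
    by rewrite le_max lexx orbT.
  apply: le_trans (ler_wpM2l (sqr_ge0 k) y_le_max).
  by rewrite mulrDl mul1r mulrDr [T^-1 * p]mulrC; lra.
- have K_l : (K - l)%:R <= k - 1.
    by rewrite lerBrDr natr1 ler_nat ltn_subrL l_gt0.
  have S2_le' : S ^+ 2 <= (k - 1) ^+ 2 * p.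
    by apply: le_trans S2_le _; rewrite ler_wpM2r // lerXn2r ?nnegrE ?ler0n ?subr_ge0.
  have p_le : p <= (T^-1 + 1) * p by rewrite mulrDl mul1r lerDr mulr_ge0 // invr_ge0 ltW.
  apply: (le_trans _ (ler_wpM2l (sqr_ge0 k) (le_max2 (lexx 1) p_le))).
  by apply: (le_trans _ (@ler_sqr_pred_mul_max _ k p k_ge1 p_ge0)); rewrite lerD2l.
Qed.

End NonincreasingPowers.

Theorem lemma5 (R : realType) (K : nat) (hK : (0 < K)%N) (P : 'I_K -> R)
  (Pnonincr : forall i j : 'I_K, (i <= j)%N -> P j <= P i)
  (Pnonneg : forall i : 'I_K, 0 <= P i)
  (P1pos : 0 < P (Ordinal hK))
  (A : {set 'I_K}) (l : 'I_K)
  (hl : l \in A) (hlmin : forall j : 'I_K, j \in A -> (l <= j)%N) :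
  2^-1 * log2 (1 + (\sum_(j in A) Num.sqrt (P j)) ^+ 2)
    - poshalflog (((\sum_(j < K) P j)^-1 + 1) * P l)
  <= log2 (K%:R : R).
Proof.
have T_gt0 : 0 < \sum_(j < K) P j by exact: sum_powers_gt0.
have y_ge0 : 0 <= ((\sum_(j < K) P j)^-1 + 1) * P l.
  by rewrite mulr_ge0 // addr_ge0 // invr_ge0 ltW.
rewrite poshalflog_max //; apply: halflog2_sub_le.
- by rewrite ltr_pwDl ?sqr_ge0.
- by rewrite lt_max ltr01.
- by rewrite ltr0n.
- exact: one_add_sqr_sum_sqrt_le.
Qed.
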